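(* Let $G$ be a finite soluble group and let $X = \{[a,b]^k \mid a,b \in G,\ (|a|,|b|)=1,\ k \in \mathbb{Z}\}$. Assume that for all $x,y \in X$ with $(|x|,|y|)=1$ we have $|xy|=|x|\,|y|$. Then $\gamma_\infty(G)$ is nilpotent.
   Context: All groups are finite. $|x|$ denotes the order of an element $x$. $[a,b]=a^{-1}b^{-1}ab$. $\gamma_\infty(G)$ denotes the nilpotent residual of $G$, i.e. the last term of the lower central series of $G$. *)

From mathcomp Require Import all_boot all_fingroup all_solvable.
Set Implicit Arguments. Unset Strict Implicit. Unset Printing Implicit Defensive.
Local Open Scope group_scope.

(* The series 'L_1(G) = G >= 'L_2(G) >= ... stabilises after
   at most #|G| steps, so 'L_(#|G|.+1)(G) is its final term. *)
Definition nil_residual (gT : finGroupType) (G : {set gT}) : {set gT} :=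
  'L_(#|G|.+1)(G).

Definition in_coprime_comm_powers (gT : finGroupType) (G : {set gT}) (x : gT)
  : Prop :=
  exists (a b : gT) (k : nat),
    [/\ a \in G, b \in G, coprime #[a] #[b] &
        x = [~ a, b] ^+ k \/ x = [~ a, b] ^- k].

(* Every commutator [a, b] with gcd(|a|, |b|) = 1 lies in the Fitting subgroup F(G).
   For its p-part x this means x is in O_p(G): modulo Q = O_p(G) the Fitting subgroup
   is a p'-group, and for any p'-element k the commutator t = [x, k] has its p-part in
   Q, so x * t_p = x^k * (t_p')^-1 is a p-element; the hypothesis on orders then kills
   t_p', hence x centralizes F(G/Q) modulo Q and, as C(F) <= F in soluble groups, x is
   trivial modulo Q.  Consequently p-elements commute with p'-elements in G/F(G), which
   is therefore nilpotent, and gamma_infinity(G) <= F(G). *)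
From mathcomp Require Import all_boot all_fingroup all_solvable.
Set Implicit Arguments. Unset Strict Implicit. Unset Printing Implicit Defensive.
Local Open Scope group_scope.

Section GeneralFacts.
Variable gT : finGroupType.
Implicit Types G H : {group gT}.

Lemma cent_sub_Fitting G : solvable G -> 'C_G('F(G)) \subset 'F(G).
Proof.
move=> solG; set C := 'C_G('F(G))%G.
have nsCG : C <| G by apply: norm_normalI; rewrite norms_cent ?gFnorm.
have cFC : C \subset 'C('F(G)) := subsetIr _ _.
have [n Cn1] : exists n, C^`(n) = 1.
  by apply/derivedP; apply: solvableS solG; apply: normal_sub.
have der_step m : C^`(m.+1) \subset 'F(G) -> C^`(m) \subset 'F(G).
  move=> sDF; apply: Fitting_max; first exact: char_normal_trans (der_char m C) nsCG.
  apply: small_nil_class; apply: leq_trans (_ : 2 <= 5) => //.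
  (* C^(m+1) <= F(G) is central in C^(m), as C centralizes F(G). *)
  rewrite nil_class2 subsetI der_sub /=; apply: subset_trans sDF _.
  by rewrite centsC; apply: subset_trans (der_sub m C) cFC.
have der_sub_Fitting j : j <= n -> C^`(n - j) \subset 'F(G).
  elim: j => [|j IHj] le_jn; first by rewrite subn0 Cn1 sub1G.
  by apply: der_step; rewrite subnSK // IHj // ltnW.
by have := der_sub_Fitting n (leqnn n); rewrite subnn derg0.
Qed.

Lemma Fitting_quotient_pcore_pgroup pi G : pi^'.-group 'F(G / 'O_pi(G)).
Proof.
have [_ defF _ _] := dprodP (nilpotent_pcoreC pi (Fitting_nil (G / 'O_pi(G)))).
have O1 : 'O_pi('F(G / 'O_pi(G))) = 1.
  by apply/trivgP; rewrite -(trivg_pcore_quotient pi G) pcore_Fitting.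
by rewrite -defF O1 mul1g pcore_pgroup.
Qed.

Lemma p_eltM_pcore pi G x z :
  x \in G -> pi.-elt x -> z \in 'O_pi(G) -> pi.-elt (x * z).
Proof.
move=> Gx pix Oz; apply: (mem_p_elt (G := ('O_pi(G) <*> <[x]>)%G)).
  rewrite /= norm_joinEr ?cycle_subG ?(subsetP (gFnorm _ _)) //.
  by rewrite pgroupM pcore_pgroup.
by rewrite groupM ?(subsetP (joing_subr _ _) x (cycle_id x)) ?(subsetP (joing_subl _ _)).
Qed.

Lemma pelt_p'elt_commute_nil G :
    solvable G ->
    (forall (p : nat) u v, u \in G -> v \in G -> p.-elt u -> p^'.-elt v ->
       commute u v) ->
  nilpotent G.
Proof.
move=> solG cGpp'; apply: nilpotentS (Fitting_nil G).
rewrite -{1}(Sylow_gen G) gen_subG; apply/bigcupsP=> P /SylowP[p _ sylP].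
apply: Fitting_max; last exact: pgroup_nil (pHall_pgroup sylP).
have [K hallK] := Hall_exists p^' solG.
have [sPG pP _] := and3P sylP; have [sKG p'K _] := and3P hallK.
have cPK : K \subset 'C(P).
  apply/centsP=> v Kv u Pu; apply: commute_sym; apply: (cGpp' p).
  - exact: subsetP sPG u Pu.
  - exact: subsetP sKG v Kv.
  - exact: mem_p_elt pP Pu.
  - exact: mem_p_elt p'K Kv.
have defG : P * K = G.
  apply/eqP; rewrite eqEcard mul_subG //= coprime_cardMg ?(pnat_coprime pP p'K) //.
  by rewrite (card_Hall sylP) (card_Hall hallK) partnC.
by rewrite /normal sPG -defG mul_subG ?normG ?cents_norm.
Qed.

Lemma nil_residual_sub G H : H <| G -> nilpotent (G / H) -> nil_residual G \subset H.
Proof.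
move=> /andP[_ nHG] nilGH; rewrite /nil_residual.
rewrite -quotient_sub1 ?(subset_trans (lcn_sub _ G)) // /quotient morphim_lcn //.
rewrite subG1; apply/eqP/(lcn_nil_classP _ nilGH); rewrite nilpotent_class in nilGH.
exact: ltnW (leq_trans nilGH (leq_quotient _ _)).
Qed.

End GeneralFacts.

Section CoprimeCommutators.
Variables (gT : finGroupType) (G : {group gT}).
Local Notation X := (in_coprime_comm_powers G).

Lemma X_sub x : X x -> x \in G.
Proof.
case=> a [b [k [Ga Gb _ [->|->]]]]; first by rewrite groupX ?groupR.
by rewrite groupV groupX ?groupR.
Qed.

Lemma X_comm a b : a \in G -> b \in G -> coprime #[a] #[b] -> X [~ a, b].
Proof. by move=> Ga Gb cab; exists a, b, 1%N; split=> //; left; rewrite expg1. Qed.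

Lemma X_exp x m : X x -> X (x ^+ m).
Proof.
case=> a [b [k [Ga Gb cab [->|->]]]]; exists a, b, (k * m)%N; split=> //.
  by left; rewrite expgM.
by right; rewrite expgVn expgM.
Qed.

Lemma X_V x : X x -> X x^-1.
Proof.
case=> a [b [k [Ga Gb cab [->|->]]]]; exists a, b, k; split=> //; first by right.
by left; rewrite invgK.
Qed.

Lemma X_J x g : g \in G -> X x -> X (x ^ g).
Proof.
move=> Gg [a [b [k [Ga Gb cab Ex]]]].
exists (a ^ g), (b ^ g), k; split; rewrite ?groupJ ?orderJ //.
by case: Ex => ->; [left | right]; rewrite ?conjVg conjXg conjRg.
Qed.

Lemma X_constt pi x : X x -> X x.`_pi.
Proof. by move=> Xx; have /cycleP[i ->] := cycle_constt pi x; apply: X_exp. Qed.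

Hypothesis orderM_X : forall x y : gT, X x -> X y ->
  coprime #[x] #[y] -> #[x * y] = (#[x] * #[y])%N.

Lemma X_comm_p_elt pi x k :
    X x -> pi.-elt x -> k \in G -> pi^'.-elt k ->
    pi.-elt (x * [~ x, k].`_pi) ->
  pi.-elt [~ x, k].
Proof.
move=> Xx pix Gk pi'k; set t := [~ x, k]; set y := t.`_pi^'.
have Xt : X t by apply: X_comm (X_sub Xx) Gk (pnat_coprime pix pi'k).
have pi'y : pi^'.-elt y := p_elt_constt _ _.
have -> : x * t.`_pi = x ^ k * y^-1.
  by rewrite conjg_mulR -/t -{2}(consttC pi t) mulgA mulgK.
have cop : coprime #[x ^ k] #[y^-1] by rewrite orderJ orderV (pnat_coprime pix pi'y).
rewrite /p_elt (orderM_X (X_J Gk Xx) (X_V (X_constt _ Xt)) cop) orderJ orderV.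
rewrite pnatM => /andP[_ piy].
have y1 : y = 1 by apply/eqP; rewrite -order_eq1 (pnat_1 piy pi'y).
by rewrite -(consttC pi t) -/y y1 mulg1; apply: p_elt_constt.
Qed.

Hypothesis solG : solvable G.

Lemma X_pcore pi x : X x -> pi.-elt x -> x \in 'O_pi(G).
Proof.
move=> Xx pix; set Q := 'O_pi(G); have Gx := X_sub Xx.
have nQG : G \subset 'N(Q) := gFnorm _ _.
have pi'F := Fitting_quotient_pcore_pgroup pi G.
apply: coset_idr; first exact: subsetP nQG x Gx.
set xb := coset Q x; have Gxb : xb \in G / Q by apply: mem_quotient.
have pixb : pi.-elt xb by apply: morph_p_elt; rewrite ?(subsetP nQG).
suff /(subsetP (cent_sub_Fitting (quotient_sol Q solG))) Fxb :
    xb \in 'C_(G / Q)('F(G / Q)).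
  by apply/eqP; rewrite -order_eq1 (pnat_1 pixb (mem_p_elt pi'F Fxb)).
rewrite inE Gxb; apply/centP=> wb Fwb; have pi'wb := mem_p_elt pi'F Fwb.
have /morphimP[w Nw Gw Ewb] := subsetP (gFsub _ _) wb Fwb.
(* F(G / Q) is a pi'-group, so w may be replaced by its pi'-part k. *)
set k := w.`_pi^'.
have Gk : k \in G by rewrite (subsetP _ _ (cycle_constt _ w)) ?cycle_subG.
have Ekb : coset Q k = wb by rewrite morph_constt // -Ewb constt_p_elt.
set t := [~ x, k]; have Gt : t \in G by rewrite groupR.
have Ftb : coset Q t \in 'F(G / Q).
  rewrite morphR ?(subsetP nQG) //= Ekb commgEr groupMr // memJ_norm ?groupV //.
  exact: subsetP (gFnorm _ _) xb Gxb.
have Qtpi : t.`_pi \in Q.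
  apply: coset_idr; first by rewrite (subsetP nQG) ?groupX.
  by rewrite morph_constt ?(subsetP nQG) //; apply/constt1P/(mem_p_elt pi'F).
have Qt : t \in Q.
  have pit : pi.-elt t.
    exact: X_comm_p_elt Xx pix Gk (p_elt_constt _ _) (p_eltM_pcore Gx pix Qtpi).
  by rewrite -(constt_p_elt pit).
apply/commgP; rewrite -Ekb -morphR ?(subsetP nQG) //=; apply/eqP; exact: coset_id.
Qed.

Lemma comm_Fitting a b :
  a \in G -> b \in G -> coprime #[a] #[b] -> [~ a, b] \in 'F(G).
Proof.
move=> Ga Gb cab; have Xab := X_comm Ga Gb cab.
rewrite -(prod_constt [~ a, b]); apply: group_prod => p _.
apply: (subsetP (pcore_sub p _)); rewrite p_core_Fitting.
exact: X_pcore (X_constt p Xab) (p_elt_constt p _).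
Qed.

Lemma quotient_Fitting_pelt_commute pi u v :
    u \in G / 'F(G) -> v \in G / 'F(G) -> pi.-elt u -> pi^'.-elt v ->
  commute u v.
Proof.
have nFG : G \subset 'N('F(G)) := gFnorm _ _.
move=> /morphimP[a Na Ga ->] /morphimP[b Nb Gb ->] piu pi'v.
have Ga' : a.`_pi \in G by rewrite (subsetP _ _ (cycle_constt _ a)) ?cycle_subG.
have Gb' : b.`_pi^' \in G by rewrite (subsetP _ _ (cycle_constt _ b)) ?cycle_subG.
rewrite -[coset_morphism _ a](constt_p_elt piu) -[coset_morphism _ b](constt_p_elt pi'v).
rewrite -!morph_constt //; apply/commgP; rewrite -morphR ?(subsetP nFG) //.
apply/eqP; apply: coset_id.
exact: comm_Fitting Ga' Gb' (pnat_coprime (p_elt_constt _ _) (p_elt_constt _ _)).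
Qed.

End CoprimeCommutators.

Theorem mainTheorem3 (gT : finGroupType) (G : {group gT}) :
  solvable G ->
  (forall x y : gT,
     in_coprime_comm_powers G x -> in_coprime_comm_powers G y ->
     coprime #[x] #[y] -> #[x * y] = (#[x] * #[y])%N) ->
  nilpotent (nil_residual G).
Proof.
move=> solG orderM_X; apply: nilpotentS (Fitting_nil G).
apply: nil_residual_sub; first exact: Fitting_normal.
apply: pelt_p'elt_commute_nil; first exact: quotient_sol.
by move=> p u v; apply: quotient_Fitting_pelt_commute.
Qed.
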